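(* Let $A, B$ be weak bialgebras over a field $\boldsymbol{k}$, and let $F=(F,\bar\phi^F,\bar\omega^F):\mathbb{M}^A\to\mathbb{M}^B$ be a strong $\boldsymbol{k}$-linear comonoidal functor, with $\bar\phi^F_{M,N}:F(M\otimes_{A_s}N)\to F(M)\otimes_{B_s}F(N)$ and $\bar\omega^F:F(A_s)\to B_s$, such that $U^B\circ F=U^A$ as monoidal functors (i.e. $F(M)$ has the same underlying vector space as $M$, $F(f)=f$, $U^B((\bar\phi^F_{M,N})^{-1})\circ\phi^{U^B}_{F(M),F(N)}=\phi^{U^A}_{M,N}$ and $U^B((\bar\omega^F)^{-1})\circ\omega^{U^B}=\omega^{U^A}$). If $F$ is a $\boldsymbol{k}$-linear monoidal equivalence, then the unique weak bialgebra map $\varphi:A\to B$ with $F=\mathbb{M}^{\varphi}$ as comonoidal functors is an isomorphism of weak bialgebras.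
   Context: A weak bialgebra over $\boldsymbol{k}$ is a vector space $H$ with an algebra structure (unit $1$) and a coalgebra structure $(\Delta,\varepsilon)$ (Sweedler notation) such that $\Delta(xy)=\Delta(x)\Delta(y)$; $(\Delta\otimes\mathrm{id})\Delta(1)=(\Delta(1)\otimes1)(1\otimes\Delta(1))=(1\otimes\Delta(1))(\Delta(1)\otimes1)$; and $\varepsilon(xyz)=\varepsilon(xy_{(1)})\varepsilon(y_{(2)}z)=\varepsilon(xy_{(2)})\varepsilon(y_{(1)}z)$. A weak bialgebra map is a unital algebra map that is a coalgebra map. $\varepsilon_s(x)=1_{(1)}\varepsilon(x1_{(2)})$, $H_s=\varepsilon_s(H)$. A right $H$-comodule $M$ ($\rho(m)=m_{(0)}\otimes m_{(1)}$) is an $(H_s,H_s)$-bimodule via $y\cdot m=m_{(0)}\varepsilon(ym_{(1)})$, $m\cdot y=m_{(0)}\varepsilon(m_{(1)}y)$. $\mathbb{M}^H$ is the monoidal category of finite-dimensional right $H$-comodules with tensor product $M\otimes_{H_s}N$ (coaction $m\otimes n\mapsto m_{(0)}\otimes n_{(0)}\otimes m_{(1)}n_{(1)}$) and unit $(H_s,\Delta|_{H_s})$. $U^H:\mathbb{M}^H\to\mathrm{Vect}^{\mathrm{f.d.}}_{\boldsymbol{k}}$ is the forgetful functor, (lax) monoidal with $\phi^{U^H}_{M,N}:M\otimes N\to M\otimes_{H_s}N$ the canonical projection and $\omega^{U^H}:\boldsymbol{k}\to H_s$, $1\mapsto1$. For a weak bialgebra map $\varphi$, $\mathbb{M}^\varphi(M,\rho)=(M,(\mathrm{id}\otimes\varphi)\rho)$,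 $\mathbb{M}^\varphi(f)=f$, with comonoidal structure maps $M\otimes_{A_s}N\to M\otimes_{B_s}N$ induced by the identity and $\varphi|_{A_s}$. A comonoidal functor has natural maps $F(M\otimes N)\to F(M)\otimes F(N)$ and $F(I)\to I'$ satisfying the duals of the monoidal functor axioms; strong means they are isomorphisms. *)

From HB Require Import structures.
From mathcomp Require Import all_boot all_order all_algebra.
From Stdlib Require Import ClassicalEpsilon.

Set Implicit Arguments.
Unset Strict Implicit.
Unset Printing Implicit Defensive.

Import GRing.Theory.
Local Open Scope ring_scope.

Section WeakBialgebras.
Variable K : fieldType.

(* An element of U (x) V is represented by a finite list of pairs           *)
(* [(u_1,v_1); ...; (u_n,v_n)], standing for  sum_i u_i (x) v_i.            *)
(* Two such representatives are equal in U (x) V iff every linear           *)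
(* functional on U (x) V, i.e. every bilinear form U x V -> K, agrees on    *)
(* them (the dual of U (x) V is Bil(U,V;K), and it separates points).       *)
Definition tens2 (U V : lmodType K) := seq (U * V).
Definition tens3 (U V W : lmodType K) := seq (U * V * W).

Definition bilinear_form (U V : lmodType K) (b : U -> V -> K) : Prop :=
  (forall (a : K) u1 u2 v, b (a *: u1 + u2) v = a * b u1 v + b u2 v) /\
  (forall (a : K) u v1 v2, b u (a *: v1 + v2) = a * b u v1 + b u v2).

Definition trilinear_form (U V W : lmodType K) (t : U -> V -> W -> K) : Prop :=
  [/\ (forall (a : K) u1 u2 v w, t (a *: u1 + u2) v w = a * t u1 v w + t u2 v w),
      (forall (a : K) u v1 v2 w, t u (a *: v1 + v2) w = a * t u v1 w + t u v2 w) &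
      (forall (a : K) u v w1 w2, t u v (a *: w1 + w2) = a * t u v w1 + t u v w2)].

Definition teq2 (U V : lmodType K) (s t : tens2 U V) : Prop :=
  forall b : U -> V -> K, bilinear_form b ->
    \sum_(p <- s) b p.1 p.2 = \sum_(p <- t) b p.1 p.2.

Definition teq3 (U V W : lmodType K) (s t : tens3 U V W) : Prop :=
  forall b : U -> V -> W -> K, trilinear_form b ->
    \sum_(p <- s) b p.1.1 p.1.2 p.2 = \sum_(p <- t) b p.1.1 p.1.2 p.2.

Record wbdata := WBData {
  wb_car :> lmodType K;
  wb_mul : wb_car -> wb_car -> wb_car;
  wb_one : wb_car;
  wb_cm  : wb_car -> tens2 wb_car wb_car;
  wb_eps : wb_car -> K }.

Record is_wba (H : wbdata) : Prop := IsWBA {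
  wba_mulA : forall x y z : H,
    wb_mul x (wb_mul y z) = wb_mul (wb_mul x y) z;
  wba_mul1l : forall x : H, wb_mul (wb_one H) x = x;
  wba_mul1r : forall x : H, wb_mul x (wb_one H) = x;
  wba_mul_linl : forall (a : K) (x1 x2 y : H),
    wb_mul (a *: x1 + x2) y = a *: wb_mul x1 y + wb_mul x2 y;
  wba_mul_linr : forall (a : K) (x y1 y2 : H),
    wb_mul x (a *: y1 + y2) = a *: wb_mul x y1 + wb_mul x y2;
  wba_cm_lin : forall (a : K) (x y : H),
    teq2 (wb_cm (a *: x + y))
         ([seq (a *: p.1, p.2) | p <- wb_cm x] ++ wb_cm y);
  wba_eps_lin : forall (a : K) (x y : H),
    wb_eps (a *: x + y) = a * wb_eps x + wb_eps y;
  wba_coassoc : forall x : H,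
    teq3 [seq (q.1, q.2, p.2) | p <- wb_cm x, q <- wb_cm p.1]
         [seq (p.1, q.1, q.2) | p <- wb_cm x, q <- wb_cm p.2];
  wba_counitl : forall x : H, \sum_(p <- wb_cm x) wb_eps p.1 *: p.2 = x;
  wba_counitr : forall x : H, \sum_(p <- wb_cm x) wb_eps p.2 *: p.1 = x;
  wba_cmM : forall x y : H,
    teq2 (wb_cm (wb_mul x y))
         [seq (wb_mul p.1 q.1, wb_mul p.2 q.2) | p <- wb_cm x, q <- wb_cm y];
  (* (Delta (x) id) Delta(1) = (Delta(1) (x) 1)(1 (x) Delta(1)) *)
  wba_unit1 :
    teq3 [seq (q.1, q.2, p.2) | p <- wb_cm (wb_one H), q <- wb_cm p.1]
         [seq (p.1, wb_mul p.2 q.1, q.2) | p <- wb_cm (wb_one H), q <- wb_cm (wb_one H)];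
  (* (Delta (x) id) Delta(1) = (1 (x) Delta(1))(Delta(1) (x) 1) *)
  wba_unit2 :
    teq3 [seq (q.1, q.2, p.2) | p <- wb_cm (wb_one H), q <- wb_cm p.1]
         [seq (p.1, wb_mul q.1 p.2, q.2) | p <- wb_cm (wb_one H), q <- wb_cm (wb_one H)];
  wba_counit1 : forall x y z : H,
    wb_eps (wb_mul (wb_mul x y) z)
    = \sum_(p <- wb_cm y) wb_eps (wb_mul x p.1) * wb_eps (wb_mul p.2 z);
  wba_counit2 : forall x y z : H,
    wb_eps (wb_mul (wb_mul x y) z)
    = \sum_(p <- wb_cm y) wb_eps (wb_mul x p.2) * wb_eps (wb_mul p.1 z) }.

Record is_wbamap (A B : wbdata) (f : A -> B) : Prop := IsWBAMap {
  wbm_lin : forall (a : K) (x y : A), f (a *: x + y) = a *: f x + f y;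
  wbm_mul : forall x y : A, f (wb_mul x y) = wb_mul (f x) (f y);
  wbm_one : f (wb_one A) = wb_one B;
  wbm_cm  : forall x : A,
    teq2 (wb_cm (f x)) [seq (f p.1, f p.2) | p <- wb_cm x];
  wbm_eps : forall x : A, wb_eps (f x) = wb_eps x }.

Definition is_wba_iso (A B : wbdata) (f : A -> B) : Prop :=
  is_wbamap f /\
  exists g : B -> A, [/\ is_wbamap g, cancel f g & cancel g f].

Definition eps_s (H : wbdata) (x : H) : H :=
  \sum_(p <- wb_cm (wb_one H)) wb_eps (wb_mul x p.2) *: p.1.

Definition in_Hs (H : wbdata) (y : H) : Prop := exists x : H, y = eps_s x.

Record preco (H : wbdata) := PreCo {
  pc_car :> vectType K;
  pc_co : pc_car -> tens2 pc_car H }.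
Arguments pc_co {H} p _.

Record is_comod (H : wbdata) (X : preco H) : Prop := IsComod {
  co_lin : forall (a : K) (x y : X),
    teq2 (pc_co X (a *: x + y))
         ([seq (a *: p.1, p.2) | p <- pc_co X x] ++ pc_co X y);
  co_coassoc : forall x : X,
    teq3 [seq (q.1, q.2, p.2) | p <- pc_co X x, q <- pc_co X p.1]
         [seq (p.1, q.1, q.2) | p <- pc_co X x, q <- wb_cm p.2];
  co_counit : forall x : X, \sum_(p <- pc_co X x) wb_eps p.2 *: p.1 = x }.

Definition is_cmap (H : wbdata) (X Y : preco H) (f : 'Hom(X, Y)) : Prop :=
  forall x : X, teq2 (pc_co Y (f x)) [seq (f p.1, p.2) | p <- pc_co X x].

(* the (H_s,H_s)-bimodule structure:  y . m  and  m . y *)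
Definition act_l (H : wbdata) (X : preco H) (y : H) (m : X) : X :=
  \sum_(p <- pc_co X m) wb_eps (wb_mul y p.2) *: p.1.
Definition act_r (H : wbdata) (X : preco H) (m : X) (y : H) : X :=
  \sum_(p <- pc_co X m) wb_eps (wb_mul p.2 y) *: p.1.
Arguments act_l {H} X y m.
Arguments act_r {H} X m y.

(* Tensor product over k of finite-dimensional spaces, in coordinates:       *)
(* M (x) N = 'M_(dim M, dim N), m (x) n = outer product of coordinates.      *)
Definition mxtens (X Y : vectType K) (x : X) (y : Y)
  : 'M[K]_(\dim {:X}, \dim {:Y}) :=
  \matrix_(i, j) (coord (vbasis {:X}) i x * coord (vbasis {:Y}) j y).

Definition tensf (X X' Y Y' : vectType K) (f : 'Hom(X, X')) (g : 'Hom(Y, Y'))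
  (v : 'M[K]_(\dim {:X}, \dim {:Y})) : 'M[K]_(\dim {:X'}, \dim {:Y'}) :=
  \sum_i \sum_j v i j *: mxtens (f (tnth (vbasis {:X}) i)) (g (tnth (vbasis {:Y}) j)).

(* coaction on M (x) N:  m (x) n |-> m_(0) (x) n_(0) (x) m_(1) n_(1) *)
Definition mcoact (H : wbdata) (X Y : preco H)
  (v : 'M[K]_(\dim {:X}, \dim {:Y})) : tens2 'M[K]_(\dim {:X}, \dim {:Y}) H :=
  flatten [seq [seq (v i j *: mxtens p.1 q.1, wb_mul p.2 q.2)
               | p <- pc_co X (tnth (vbasis {:X}) i),
                 q <- pc_co Y (tnth (vbasis {:Y}) j)]
          | i <- enum 'I_(\dim {:X}), j <- enum 'I_(\dim {:Y})].

Arguments mcoact {H} X Y v.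

(* the generators (m . y) (x) n - m (x) (y . n), y in H_s, of the kernel of  *)
(* M (x) N -> M (x)_{H_s} N                                                  *)
Definition brel (H : wbdata) (X Y : preco H)
  (v : 'M[K]_(\dim {:X}, \dim {:Y})) : Prop :=
  exists y : H, in_Hs y /\
  exists (m : X) (n : Y), v = mxtens (act_r X m y) n - mxtens m (act_l Y y n).

Definition in_span (V : lmodType K) (P : V -> Prop) (v : V) : Prop :=
  exists n (c : 'I_n -> K) (w : 'I_n -> V),
    (forall i, P (w i)) /\ v = \sum_i c i *: w i.

(* The tensor product object M (x)_{H_s} N of M^H: a comodule T together     *)
(* with the canonical projection pi : M (x) N -> T (surjective, with kernel  *)
(* the span of the balancing relations, and a comodule map for the coaction *)
(* of M (x) N).  Such a quotient is unique up to unique isomorphism; we fix  *)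
(* one by choice.                                                            *)
Record btens (H : wbdata) (X Y : preco H) := BTens {
  bt_obj : preco H;
  bt_proj : 'Hom('M[K]_(\dim {:X}, \dim {:Y}), bt_obj) }.
Arguments bt_obj {H X Y} b.
Arguments bt_proj {H X Y} b.

Definition is_btens (H : wbdata) (X Y : preco H) (T : btens X Y) : Prop :=
  [/\ (forall t : bt_obj T, exists v, bt_proj T v = t),
      (forall v, bt_proj T v = 0 <-> in_span (@brel H X Y) v) &
      (forall v, teq2 (pc_co (bt_obj T) (bt_proj T v))
                      [seq (bt_proj T p.1, p.2) | p <- mcoact X Y v])].

Definition btens_default (H : wbdata) (X Y : preco H) : btens X Y :=
  @BTens H X Y (@PreCo H 'M[K]_(\dim {:X}, \dim {:Y}) (fun _ => [::])) \1%VF.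

Definition btensor (H : wbdata) (X Y : preco H) : btens X Y :=
  epsilon (inhabits (btens_default X Y)) (@is_btens H X Y).

(* M (x)_{H_s} N as an object, and phi^{U^H}_{M,N} : M (x) N -> M (x)_{H_s} N *)
Definition bobj (H : wbdata) (X Y : preco H) : preco H := bt_obj (btensor X Y).
Definition bproj (H : wbdata) (X Y : preco H)
  : 'Hom('M[K]_(\dim {:X}, \dim {:Y}), bobj X Y) := bt_proj (btensor X Y).

(* The unit object (H_s, Delta|_{H_s}): a comodule U with a linear injection *)
(* inc : U -> H with image H_s, intertwining the coaction of U with Delta.   *)
(* Fixed by choice.                                                          *)
Record unitr (H : wbdata) := UnitR {
  u_obj : preco H;
  u_inc : u_obj -> H }.
Arguments u_inc {H} u _.

Definition is_unitr (H : wbdata) (U : unitr H) : Prop :=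
  [/\ (forall (a : K) (x y : u_obj U),
         u_inc U (a *: x + y) = a *: u_inc U x + u_inc U y),
      injective (u_inc U),
      (forall y : H, in_Hs y <-> exists w, u_inc U w = y) &
      (forall w, teq2 [seq (u_inc U p.1, p.2) | p <- pc_co (u_obj U) w]
                      (wb_cm (u_inc U w)))].

Definition unitr_default (H : wbdata) : unitr H :=
  @UnitR H (@PreCo H 'rV[K]_0 (fun _ => [::])) (fun _ => 0).

Definition unitobj (H : wbdata) : unitr H :=
  epsilon (inhabits (unitr_default H)) (@is_unitr H).

(* Functors F : M^A -> M^B with U^B o F = U^A: F(M) has the same underlying  *)
(* space as M and F(f) = f.  Such an F is given by its action on coactions.  *)
Definition Fobj (A B : wbdata) (Fco : forall X : preco A, X -> tens2 X B)
  (X : preco A) : preco B := @PreCo B (pc_car X) (Fco X).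

Record strong_comonoidal_over_forget (A B : wbdata)
  (Fco : forall X : preco A, X -> tens2 X B)
  (phiF : forall X Y : preco A,
     'Hom(Fobj Fco (bobj X Y), bobj (Fobj Fco X) (Fobj Fco Y)))
  (omF : 'Hom(Fobj Fco (u_obj (unitobj A)), u_obj (unitobj B))) : Prop :=
 SCOF {
  F_obj : forall X : preco A, is_comod X -> is_comod (Fobj Fco X);
  F_mor : forall (X Y : preco A) (f : 'Hom(X, Y)),
    is_comod X -> is_comod Y -> is_cmap f ->
    @is_cmap B (Fobj Fco X) (Fobj Fco Y) f;
  phi_cmap : forall X Y : preco A, is_comod X -> is_comod Y ->
    is_cmap (phiF X Y);
  phi_natural : forall (X X' Y Y' : preco A) (f : 'Hom(X, X')) (g : 'Hom(Y, Y')),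
    is_comod X -> is_comod X' -> is_comod Y -> is_comod Y' ->
    is_cmap f -> is_cmap g ->
    forall v u,
      phiF X Y (bproj X Y v) = bproj (Fobj Fco X) (Fobj Fco Y) u ->
      phiF X' Y' (bproj X' Y' (tensf f g v))
      = bproj (Fobj Fco X') (Fobj Fco Y') (tensf f g u);
  om_cmap : is_cmap omF;
  phi_bij : forall X Y : preco A, is_comod X -> is_comod Y ->
    bijective (phiF X Y);
  om_bij : bijective omF;
  phi_forget : forall X Y : preco A, is_comod X -> is_comod Y ->
    forall v, (phiF X Y)^-1%VF (bproj (Fobj Fco X) (Fobj Fco Y) v) = bproj X Y v;
  (* U^B(omegabar^{-1}) o omega^{U^B} = omega^{U^A}  (1 |-> 1) *)
  om_forget : forall w : u_obj (unitobj B),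
    u_inc (unitobj B) w = wb_one B ->
    u_inc (unitobj A) ((omF^-1)%VF w) = wb_one A }.

(* F is an equivalence of categories M^A -> M^B (it is faithful since        *)
(* F(f) = f; we require it full and essentially surjective).                *)
Definition is_equivalence (A B : wbdata)
  (Fco : forall X : preco A, X -> tens2 X B) : Prop :=
  (forall (X Y : preco A) (f : 'Hom(X, Y)),
     is_comod X -> is_comod Y ->
     @is_cmap B (Fobj Fco X) (Fobj Fco Y) f -> is_cmap f) /\
  (forall Z : preco B, is_comod Z ->
     exists X : preco A, is_comod X /\
     exists (f : 'Hom(Fobj Fco X, Z)) (g : 'Hom(Z, Fobj Fco X)),
       [/\ is_cmap f, is_cmap g, cancel f g & cancel g f]).

(* F = M^phi as comonoidal functors: same coactions (id (x) phi) rho, same   *)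
(* morphisms (automatic), phibar induced by the identity of M (x) N, and     *)
(* omegabar = phi restricted to A_s.                                         *)
Definition eq_Mphi (A B : wbdata)
  (Fco : forall X : preco A, X -> tens2 X B)
  (phiF : forall X Y : preco A,
     'Hom(Fobj Fco (bobj X Y), bobj (Fobj Fco X) (Fobj Fco Y)))
  (omF : 'Hom(Fobj Fco (u_obj (unitobj A)), u_obj (unitobj B)))
  (phi : A -> B) : Prop :=
  [/\ (forall X : preco A, is_comod X ->
         forall x : X, teq2 (Fco X x) [seq (p.1, phi p.2) | p <- pc_co X x]),
      (forall X Y : preco A, is_comod X -> is_comod Y ->
         forall v, phiF X Y (bproj X Y v) = bproj (Fobj Fco X) (Fobj Fco Y) v) &
      (forall w, u_inc (unitobj B) (omF w) = phi (u_inc (unitobj A) w))].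

End WeakBialgebras.

(* Every element h of a coalgebra lies in a finite-dimensional subcomodule of
   the regular comodule: writing Delta h = sum_i u_i (x) v_i with both families
   free, the u_i span a comodule whose coaction is a comatrix.
   Surjectivity: y in B lies in such a subcomodule Z, and Z ~ F(X) by essential
   surjectivity; since F = M^phi, the coaction of Z is that of X pushed through
   phi, and counitality writes y as phi of an element of A.
   Injectivity: if phi(a) = 0, let X be a finite subcomodule containing a.  The
   kernel U of phi on X is a B-subcomodule of F(X), hence U ~ F(Y), and by
   fullness the inclusion Y -> X is an A-comodule map; counitality then forces
   every element of U to vanish in A.
   Tensors over infinite-dimensional spaces are compared through bilinear forms;
   contracting such identities needs linear forms to separate points, which is
   where Zorn's lemma enters (scalar_extend). *)

From mathcomp Require Import all_boot all_order all_algebra.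
From mathcomp Require classical_sets.
From Stdlib Require Import Classical ClassicalEpsilon.

Set Implicit Arguments.
Unset Strict Implicit.
Unset Printing Implicit Defensive.

Import GRing.Theory.
Local Open Scope ring_scope.

Section LinearForms.
Variable K : fieldType.

Section Unbundled.
Variables (V W : lmodType K).

Lemma scalarf0 (f : V -> K) : scalar f -> f 0 = 0.
Proof.
move=> sf; have := sf 1 0 0; rewrite scale1r addr0 mul1r => f0.
by apply: (@addIr _ (f 0)); rewrite add0r -f0.
Qed.

Lemma scalarfD (f : V -> K) x y : scalar f -> f (x + y) = f x + f y.
Proof. by move=> sf; have := sf 1 x y; rewrite scale1r mul1r. Qed.

Lemma scalarfZ (f : V -> K) a x : scalar f -> f (a *: x) = a * f x.
Proof. by move=> sf; rewrite -[a *: x]addr0 sf (scalarf0 sf) addr0. Qed.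

Lemma scalarfB (f : V -> K) x y : scalar f -> f (x - y) = f x - f y.
Proof. by move=> sf; rewrite scalarfD // -scaleN1r scalarfZ // mulN1r. Qed.

Lemma scalarf_sum (f : V -> K) I (r : seq I) (P : pred I) (F : I -> V) :
  scalar f -> f (\sum_(i <- r | P i) F i) = \sum_(i <- r | P i) f (F i).
Proof.
move=> sf; elim/big_rec2: _ => [|i y1 y2 _ <-]; first exact: scalarf0.
exact: scalarfD.
Qed.

Lemma linear_id : linear (@id V).
Proof. by []. Qed.

Lemma linearf0 (f : V -> W) : linear f -> f 0 = 0.
Proof.
move=> lf; have := lf 1 0 0; rewrite !scale1r addr0 => f0.
by apply: (@addIr _ (f 0)); rewrite add0r -f0.
Qed.

Lemma linearfD (f : V -> W) x y : linear f -> f (x + y) = f x + f y.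
Proof. by move=> lf; have := lf 1 x y; rewrite !scale1r. Qed.

Lemma linearfZ (f : V -> W) a x : linear f -> f (a *: x) = a *: f x.
Proof. by move=> lf; rewrite -[a *: x]addr0 lf (linearf0 lf) addr0. Qed.

Lemma linearfB (f : V -> W) x y : linear f -> f (x - y) = f x - f y.
Proof. by move=> lf; rewrite linearfD // -scaleN1r linearfZ // scaleN1r. Qed.

Lemma linearf_sum (f : V -> W) I (r : seq I) (P : pred I) (F : I -> V) :
  linear f -> f (\sum_(i <- r | P i) F i) = \sum_(i <- r | P i) f (F i).
Proof.
move=> lf; elim/big_rec2: _ => [|i y1 y2 _ <-]; first exact: linearf0.
exact: linearfD.
Qed.

Lemma sum_delta_row n (i : 'I_n) (F : 'I_n -> V) :
  \sum_j (delta_mx 0 i : 'rV[K]_n) 0 j *: F j = F i.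
Proof.
rewrite (bigD1 i) //= big1 => [|j /negbTE j_neq_i]; last by rewrite mxE j_neq_i scale0r.
by rewrite mxE !eqxx scale1r addr0.
Qed.

End Unbundled.

Lemma sum_delta_l n (k : 'I_n) (F : 'I_n -> K) : \sum_i (i == k)%:R * F i = F k.
Proof.
rewrite (bigD1 k) //= eqxx mul1r big1 ?addr0 // => i /negbTE ->; exact: mul0r.
Qed.

Section FormExtension.
Variables (V' V : lmodType K) (L : V' -> V) (g : V' -> K).
Hypotheses (linL : linear L) (scal_g : scalar g) (g_ker : forall w, L w = 0 -> g w = 0).

Record partial_extension (G : V * K -> Prop) : Prop := PartialExtension {
  pext_base : forall w, G (L w, g w);
  pext_functional : forall v a b, G (v, a) -> G (v, b) -> a = b;
  pext_closed : forall c v w a b,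
    G (v, a) -> G (w, b) -> G (c *: v + w, c * a + b) }.

Lemma base_partial_extension :
  partial_extension (fun t => exists w, t = (L w, g w)).
Proof.
split=> [w|v a b [w1 [-> ->]] [w2 [eL ->]]|c v w a b [w1 [-> ->]] [w2 [-> ->]]].
- by exists w.
- apply/eqP; rewrite -subr_eq0 -scalarfB //; apply/eqP/g_ker.
  by rewrite linearfB // eL subrr.
- by exists (c *: w1 + w2); rewrite linL scal_g.
Qed.

Lemma pext_zero G : partial_extension G -> G (0, 0).
Proof. by move=> Gext; have := pext_base Gext 0; rewrite linearf0 // scalarf0. Qed.

Lemma chain_partial_extension (F : (V * K -> Prop) -> Prop) G0 t0 :
  (forall G t, F G -> G t -> partial_extension G) -> F G0 -> G0 t0 ->
  (forall G G', F G -> F G' -> (forall t, G t -> G' t) \/ (forall t, G' t -> G t)) ->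
  partial_extension (fun t => exists2 G, F G & G t).
Proof.
move=> Fext FG0 G0t0 Ftot; split=> [w|v a b|c v w a b].
- by exists G0 => //; apply: pext_base (Fext _ _ FG0 G0t0) w.
- move=> [G FG Ga] [G' FG' G'b].
  have [GG'|G'G] := Ftot G G' FG FG'.
    exact: (pext_functional (Fext _ _ FG' G'b) (GG' _ Ga) G'b).
  exact: (pext_functional (Fext _ _ FG Ga) Ga (G'G _ G'b)).
- move=> [G FG Ga] [G' FG' G'b].
  have [GG'|G'G] := Ftot G G' FG FG'.
    by exists G'; last exact: (pext_closed (Fext _ _ FG' G'b) c (GG' _ Ga) G'b).
  by exists G; last exact: (pext_closed (Fext _ _ FG Ga) c Ga (G'G _ G'b)).
Qed.

Lemma point_partial_extension G y :
  partial_extension G -> ~ (exists a, G (y, a)) ->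
  partial_extension (fun t => exists v a c, G (v, a) /\ t = (v + c *: y, a)).
Proof.
move=> Gext Gy; split=> [w|v0 a b|d v0 w0 a b].
- by exists (L w), (g w), 0; rewrite scale0r addr0; split => //; apply: pext_base.
- move=> [v [a' [c [Ga [-> ->]]]]] [v' [b' [c' [Gb [ev ->]]]]].
  have [ecc|ncc] := eqVneq c c'.
    by move: ev; rewrite ecc => /addIr evv; apply: (pext_functional Gext Ga); rewrite evv.
  suff : exists a, G (y, a) by [].
  have ediff : v' - v = (c - c') *: y.
    by rewrite -[v'](addrK (c' *: y)) -ev scalerBl addrAC [v + _]addrC addrK.
  have Gd : G (v' - v, b' - a').
    by rewrite !(addrC _ (- _)) -scaleN1r -[- a']mulN1r; apply: pext_closed.
  have := pext_closed Gext ((c - c')^-1) Gd (pext_zero Gext).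
  rewrite ediff scalerA mulVf ?subr_eq0 // scale1r !addr0.
  by exists ((c - c')^-1 * (b' - a')).
- move=> [v [a' [c [Ga [-> ->]]]]] [w [b' [e [Gb [-> ->]]]]].
  exists (d *: v + w), (d * a' + b'), (d * c + e); split; first exact: pext_closed.
  by rewrite scalerDr scalerA scalerDl addrACA.
Qed.

Theorem scalar_extend : exists f, scalar f /\ forall w, f (L w) = g w.
Proof.
(* The empty relation is admitted so that the empty chain has an upper bound. *)
pose P G := (forall t, ~ G t) \/ partial_extension G.
have [A [PA Amax]] : exists A, P A /\ forall B, classical_sets.proper A B -> ~ P B.
  apply: classical_sets.Zorn_bigcup => F FP Ftot.
  have [[G0 FG0 [t G0t]]|Fempty] := classic (exists2 G, F G & exists t, G t).
    right; apply: (chain_partial_extension (G0 := G0) (t0 := t)) => // G s FG Gs.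
    by case: (FP G FG) => [/(_ s)|//].
  by left=> t [G FG Gt]; apply: Fempty; exists G => //; exists t.
have Aext : partial_extension A.
  case: PA => // Aempty; exfalso; apply: (Amax _ _ (or_intror base_partial_extension)).
  split=> [t /Aempty //|sub]; apply: (Aempty (L 0, g 0)); apply: sub; by exists 0.
have Atotal y : exists a, A (y, a).
  apply: NNPP => Ay; apply: (Amax _ _ (or_intror (point_partial_extension Aext Ay))).
  split=> [[v a] Ava|sub]; first by exists v, a, 0; rewrite scale0r addr0.
  apply: Ay; exists 0; apply: sub; exists 0, 0, 1.
  by rewrite add0r scale1r; split=> //; apply: pext_zero.
pose f y := epsilon (inhabits 0) (fun a => A (y, a)).
have Af y : A (y, f y) := epsilon_spec (inhabits 0) (fun a => A (y, a)) (Atotal y).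
exists f; split=> [c x y|w].
- by apply: (pext_functional Aext (Af _)); apply: pext_closed.
- by apply: (pext_functional Aext (Af _)); apply: pext_base.
Qed.

End FormExtension.

Lemma scalar_sep (V : lmodType K) (x : V) : x != 0 -> exists f, scalar f /\ f x = 1.
Proof.
move=> x_neq0.
have lin_x : linear (fun c : K^o => c *: x) by move=> a c d; rewrite scalerDl scalerA.
have [f [sf fx]] : exists f, scalar f /\ forall c : K^o, f (c *: x) = c.
  apply: scalar_extend => // c /eqP.
  by rewrite scaler_eq0 (negbTE x_neq0) orbF => /eqP.
by exists f; split => //; rewrite -[x]scale1r fx.
Qed.

Lemma scalar_sep_eq (V : lmodType K) (u v : V) :
  (forall f, scalar f -> f u = f v) -> u = v.
Proof.
move=> fuv; apply/eqP; rewrite -subr_eq0; apply/negPn/negP => /scalar_sep[f [sf]].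
by rewrite scalarfB // fuv // subrr => /eqP; rewrite eq_sym oner_eq0.
Qed.

Definition free_family (V : lmodType K) n (u : 'I_n -> V) :=
  forall c : 'I_n -> K, \sum_i c i *: u i = 0 -> forall i, c i = 0.

Lemma dual_family (V : lmodType K) n (u : 'I_n -> V) : free_family u ->
  exists f : 'I_n -> V -> K,
    (forall j, scalar (f j)) /\ forall j i, f j (u i) = (i == j)%:R.
Proof.
move=> u_free.
have comb_lin : linear (fun c : 'rV[K]_n => \sum_i c 0 i *: u i).
  move=> a c d; rewrite scaler_sumr -big_split; apply: eq_bigr => i _.
  by rewrite !mxE scalerDl scalerA.
have dual j : exists f, scalar f /\ forall i, f (u i) = (i == j)%:R.
  have [f [sf fu]] : exists f, scalar f /\
      forall c : 'rV[K]_n, f (\sum_i c 0 i *: u i) = c 0 j.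
    by apply: scalar_extend => // [a c d|c /u_free]; rewrite ?mxE.
  exists f; split => // i.
  by have := fu (delta_mx 0 i); rewrite sum_delta_row mxE eqxx eq_sym.
pose f j := epsilon (inhabits (fun _ => 0))
  (fun f => scalar f /\ forall i, f (u i) = (i == j)%:R).
have fP j : scalar (f j) /\ forall i, f j (u i) = (i == j)%:R.
  exact: epsilon_spec (dual j).
by exists f; split=> [j|j i]; [case: (fP j) | case: (fP j) => _ ->].
Qed.

End LinearForms.

Section Multilinear.
Variable K : fieldType.

Section Bilinear.
Variables (U V : lmodType K) (b : U -> V -> K).
Hypothesis bb : bilinear_form b.

Lemma bil_scalarl y : scalar (b^~ y).
Proof. by case: bb => bl _ a x1 x2; apply: bl. Qed.

Lemma bil_scalarr x : scalar (b x).
Proof. by case: bb => _ br a y1 y2; apply: br. Qed.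

Lemma bilZl a x y : b (a *: x) y = a * b x y.
Proof. exact: scalarfZ (bil_scalarl y). Qed.

Lemma bilZr a x y : b x (a *: y) = a * b x y.
Proof. exact: scalarfZ (bil_scalarr x). Qed.

Lemma bil_suml I (r : seq I) (P : pred I) (F : I -> U) y :
  b (\sum_(i <- r | P i) F i) y = \sum_(i <- r | P i) b (F i) y.
Proof. exact: scalarf_sum (bil_scalarl y). Qed.

Lemma bil_sumr I (r : seq I) (P : pred I) (F : I -> V) x :
  b x (\sum_(i <- r | P i) F i) = \sum_(i <- r | P i) b x (F i).
Proof. exact: scalarf_sum (bil_scalarr x). Qed.

End Bilinear.

Lemma bilinear_formP (U V : lmodType K) (b : U -> V -> K) :
  (forall y, scalar (b^~ y)) -> (forall x, scalar (b x)) -> bilinear_form b.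
Proof. by move=> bl br; split=> *; [apply: bl | apply: br]. Qed.

Lemma bilinear_form_mul (U V : lmodType K) (f : U -> K) (g : V -> K) :
  scalar f -> scalar g -> bilinear_form (fun x y => f x * g y).
Proof.
move=> sf sg; apply: bilinear_formP => [y|x] a u v.
  by rewrite sf mulrDl mulrA.
by rewrite sg mulrDr mulrCA.
Qed.

Lemma bilinear_form_comp (U V U' V' : lmodType K) (f : U -> U') (g : V -> V')
  (b : U' -> V' -> K) :
  linear f -> linear g -> bilinear_form b -> bilinear_form (fun x y => b (f x) (g y)).
Proof. by move=> lf lg [bl br]; split=> *; rewrite ?lf ?lg ?bl ?br. Qed.

Section Trilinear.
Variables (U V W : lmodType K) (t : U -> V -> W -> K).
Hypothesis tt : trilinear_form t.

Lemma tri_bilinear12 z : bilinear_form (fun x y => t x y z).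
Proof. by case: tt => t1 t2 _; split=> *; rewrite ?t1 ?t2. Qed.

Lemma tri_bilinear23 x : bilinear_form (t x).
Proof. by case: tt => _ t2 t3; split=> *; rewrite ?t2 ?t3. Qed.

End Trilinear.

Lemma trilinear_form_mull (U V W : lmodType K) (f : U -> K) (b : V -> W -> K) :
  scalar f -> bilinear_form b -> trilinear_form (fun x y z => f x * b y z).
Proof.
move=> sf [bl br]; split=> *; first by rewrite sf mulrDl mulrA.
  by rewrite bl mulrDr mulrCA.
by rewrite br mulrDr mulrCA.
Qed.

Lemma trilinear_form_mulr (U V W : lmodType K) (b : U -> V -> K) (f : W -> K) :
  bilinear_form b -> scalar f -> trilinear_form (fun x y z => b x y * f z).
Proof.
move=> [bl br] sf; split=> *; first by rewrite bl mulrDl mulrA.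
  by rewrite br mulrDl mulrA.
by rewrite sf mulrDr mulrCA.
Qed.

End Multilinear.

Section Tensors.
Variable K : fieldType.

Section TensorEquality.
Variables (U V : lmodType K).
Implicit Types s t : tens2 U V.

Lemma teq2_sym s t : teq2 s t -> teq2 t s.
Proof. by move=> st b bb; rewrite st. Qed.

Lemma teq2_trans s t r : teq2 s t -> teq2 t r -> teq2 s r.
Proof. by move=> st tr b bb; rewrite st ?tr. Qed.

Lemma teq2_map (U' V' : lmodType K) (f : U -> U') (g : V -> V') s t :
  linear f -> linear g -> teq2 s t ->
  teq2 [seq (f p.1, g p.2) | p <- s] [seq (f p.1, g p.2) | p <- t].
Proof.
move=> lf lg st b bb; rewrite !big_map.
exact: st (fun x y => b (f x) (g y)) (bilinear_form_comp lf lg bb).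
Qed.

Lemma teq2_contr_l (g : U -> K) s t : scalar g -> teq2 s t ->
  \sum_(p <- s) g p.1 *: p.2 = \sum_(p <- t) g p.1 *: p.2.
Proof.
move=> sg st; apply: scalar_sep_eq => f sf; rewrite !(@scalarf_sum _ _ f) //.
have fZ (p : U * V) : f (g p.1 *: p.2) = g p.1 * f p.2 := scalarfZ _ _ sf.
by rewrite !(eq_bigr _ (fun p _ => fZ p)); apply: st (bilinear_form_mul sg sf).
Qed.

Lemma teq2_contr_r (g : V -> K) s t : scalar g -> teq2 s t ->
  \sum_(p <- s) g p.2 *: p.1 = \sum_(p <- t) g p.2 *: p.1.
Proof.
move=> sg st; apply: scalar_sep_eq => f sf; rewrite !(@scalarf_sum _ _ f) //.
have fZ (p : U * V) : f (g p.2 *: p.1) = f p.1 * g p.2 by rewrite mulrC; apply: scalarfZ.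
by rewrite !(eq_bigr _ (fun p _ => fZ p)); apply: st (bilinear_form_mul sf sg).
Qed.

End TensorEquality.

Definition tswap (U V : lmodType K) (s : tens2 U V) : tens2 V U :=
  [seq (p.2, p.1) | p <- s].

Lemma tswapK (U V : lmodType K) : cancel (@tswap U V) (@tswap V U).
Proof. by move=> s; rewrite /tswap -map_comp map_id_in //; case. Qed.

Lemma teq2_tswap (U V : lmodType K) (s t : tens2 U V) :
  teq2 s t -> teq2 (tswap s) (tswap t).
Proof.
move=> st b [bl br]; rewrite !big_map.
by apply: (st (fun x y => b y x)); split=> *; rewrite ?bl ?br.
Qed.

Definition tfam (U V : lmodType K) n (u : 'I_n -> U) (v : 'I_n -> V) : tens2 U V :=
  [seq (u i, v i) | i <- enum 'I_n].

Lemma big_tfam (U V : lmodType K) n (u : 'I_n -> U) (v : 'I_n -> V)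
  (R : nmodType) (F : U * V -> R) :
  \sum_(p <- tfam u v) F p = \sum_i F (u i, v i).
Proof. by rewrite big_map big_enum. Qed.

Lemma tfam_reduce_l (U V : lmodType K) n (u : 'I_n -> U) (v : 'I_n -> V) :
  ~ free_family u -> exists s : tens2 U V, (size s < n)%N /\ teq2 (tfam u v) s.
Proof.
move=> u_dep.
have [c [c0 [k ck]]] : exists c : 'I_n -> K, \sum_i c i *: u i = 0 /\ exists k, c k != 0.
  apply: NNPP => nc; apply: u_dep => c csum0 i; apply: NNPP => ci.
  by apply: nc; exists c; split => //; exists i; apply/eqP.
exists [seq (u i, v i - ((c k)^-1 * c i) *: v k) | i <- enum 'I_n & i != k].
split.
  rewrite size_map size_filter -[X in (_ < X)%N](size_enum_ord n).
  rewrite -(count_predC (pred1 k)) (count_uniq_mem _ (enum_uniq _)) mem_enum.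
  exact: leqnn.
move=> b bb; rewrite big_tfam big_map big_filter big_enum_cond /=.
have uk : (c k)^-1 *: \sum_(i | i != k) c i *: u i = (-1) *: u k.
  move/eqP: c0; rewrite (bigD1 k) //= addrC addr_eq0 => /eqP ->.
  by rewrite scalerN scalerA mulVf // scale1r scaleN1r.
transitivity (\sum_(i | i != k) b (u i) (v i)
              - b ((c k)^-1 *: \sum_(i | i != k) c i *: u i) (v k)).
  by rewrite (bigD1 k) //= uk bilZl // mulN1r opprK addrC.
rewrite scaler_sumr bil_suml // -sumrB; apply: eq_bigr => i _.
by rewrite (scalarfB _ _ (bil_scalarr bb _)) scalerA !bilZl // bilZr.
Qed.

Lemma tfam_reduce_r (U V : lmodType K) n (u : 'I_n -> U) (v : 'I_n -> V) :
  ~ free_family v -> exists s : tens2 U V, (size s < n)%N /\ teq2 (tfam u v) s.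
Proof.
move=> /(tfam_reduce_l u) [s [size_s vu_s]].
exists (tswap s); split; first by rewrite size_map.
by rewrite -[tfam u v]tswapK; apply: teq2_tswap; rewrite /tswap /tfam -map_comp.
Qed.

Lemma tens2_free_rep (U V : lmodType K) (s : tens2 U V) :
  exists n (u : 'I_n -> U) (v : 'I_n -> V),
    [/\ free_family u, free_family v & teq2 s (tfam u v)].
Proof.
elim: {s}(size s) {-2}s (leqnn (size s)) => [|m IH] s.
  rewrite leqn0 => /nilP ->; exists 0, (fun _ => 0), (fun _ => 0).
  by split=> [c _ [] //|c _ [] //|b _]; rewrite big_nil big_tfam big_ord0.
move=> size_s.
pose u (i : 'I_(size s)) := (nth (0, 0) s i).1.
pose v (i : 'I_(size s)) := (nth (0, 0) s i).2.
have s_uv : teq2 s (tfam u v).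
  by move=> b bb; rewrite big_tfam (big_nth (0, 0)) big_mkord.
have reduce s' : (size s' < size s)%N -> teq2 (tfam u v) s' ->
    exists n (u' : 'I_n -> U) (v' : 'I_n -> V),
      [/\ free_family u', free_family v' & teq2 s (tfam u' v')].
  move=> size_s' uv_s'; have /IH [n [u' [v' [u'_free v'_free s'_uv]]]] :
    (size s' <= m)%N by rewrite -ltnS (leq_trans size_s').
  exists n, u', v'; split=> //; exact: teq2_trans s_uv (teq2_trans uv_s' s'_uv).
have [u_free|] := classic (free_family u); last first.
  by move=> /(tfam_reduce_l v) [s' []]; apply: reduce.
have [v_free|] := classic (free_family v); last first.
  by move=> /(tfam_reduce_r u) [s' []]; apply: reduce.
by exists (size s), u, v.
Qed.

End Tensors.

Section Coalgebra.
Variables (K : fieldType) (H : wbdata K).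
Hypothesis hH : is_wba H.

Lemma eps_scalar : scalar (@wb_eps K H).
Proof. exact: wba_eps_lin hH. Qed.

Lemma cm_scalar (b : H -> H -> K) : bilinear_form b ->
  scalar (fun x => \sum_(q <- wb_cm x) b q.1 q.2).
Proof.
move=> bb a x y; rewrite (wba_cm_lin hH a x y bb) big_cat big_map mulr_sumr.
by congr (_ + _); apply: eq_bigr => p _; rewrite bilZl.
Qed.

Lemma cm_contr_r_linear (g : H -> K) : scalar g ->
  linear (fun y : H => \sum_(q <- wb_cm y) g q.2 *: q.1).
Proof.
move=> sg a x y; rewrite (teq2_contr_r sg (wba_cm_lin hH a x y)) big_cat big_map.
rewrite scaler_sumr; congr (_ + _); apply: eq_bigr => p _.
by rewrite scalerA mulrC -scalerA.
Qed.

Lemma cm_coassoc (x : H) (T : H -> H -> H -> K) : trilinear_form T ->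
  \sum_(p <- wb_cm x) \sum_(q <- wb_cm p.1) T q.1 q.2 p.2 =
  \sum_(p <- wb_cm x) \sum_(q <- wb_cm p.2) T p.1 q.1 q.2.
Proof. by move=> tT; have := wba_coassoc hH x tT; rewrite !big_allpairs_dep. Qed.

Definition regular_cmap (X : preco H) (iota : X -> H) : Prop :=
  linear iota /\
  forall x, teq2 (wb_cm (iota x)) [seq (iota p.1, p.2) | p <- @pc_co _ _ X x].

Lemma regular_cmap_counit (X : preco H) (iota : X -> H) x : regular_cmap iota ->
  iota x = \sum_(p <- @pc_co _ _ X x) wb_eps (iota p.1) *: p.2.
Proof.
case=> _ iota_co; rewrite -[LHS](wba_counitl hH).
by rewrite (teq2_contr_l eps_scalar (iota_co x)) big_map.
Qed.

Lemma regular_cmap_eps (X : preco H) (iota : X -> H) : regular_cmap iota ->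
  scalar (fun x => wb_eps (iota x)).
Proof. by case=> liota _ a x y; rewrite liota eps_scalar. Qed.

Section Comatrix.
Variables (n : nat) (d : 'I_n -> 'I_n -> H).
Hypotheses (eps_d : forall i j, wb_eps (d i j) = (i == j)%:R)
           (cm_d : forall i j, teq2 (wb_cm (d i j)) (tfam (d i) (d^~ j))).

Definition comatrix_comod : preco H :=
  @PreCo K H 'rV[K]_n
    (fun x => tfam (fun i => delta_mx 0 i) (fun i => \sum_j x 0 j *: d i j)).

Lemma comatrix_comodP : is_comod comatrix_comod.
Proof.
split=> [a x y b bb|x T tT|x] /=.
- rewrite big_cat big_map !big_tfam /= -big_split; apply: eq_bigr => i _ /=.
  rewrite (bilZl bb) -(bilZr bb) -(scalarfD _ _ (bil_scalarr bb _)); congr (b _ _).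
  rewrite scaler_sumr -big_split; apply: eq_bigr => j _.
  by rewrite !mxE scalerDl scalerA.
- have T3 l y : scalar (T 'e_l y) := bil_scalarr (tri_bilinear23 tT _) _.
  have cmT l : scalar (fun z => \sum_(q <- wb_cm z) T 'e_l q.1 q.2).
    exact: cm_scalar (tri_bilinear23 tT _).
  rewrite !big_allpairs_dep !big_tfam /=.
  transitivity (\sum_l \sum_j x 0 j * \sum_i T 'e_l (d l i) (d i j)).
    under eq_bigr do rewrite big_tfam /=.
    rewrite exchange_big; apply: eq_bigr => l _ /=.
    under eq_bigr do rewrite sum_delta_row (scalarf_sum _ _ _ (T3 _ _)).
    rewrite exchange_big; apply: eq_bigr => j _ /=; rewrite mulr_sumr.
    by apply: eq_bigr => i _; rewrite (scalarfZ _ _ (T3 _ _)).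
  apply: eq_bigr => l _; rewrite (scalarf_sum _ _ _ (cmT l)); apply: eq_bigr => j _.
  by rewrite (scalarfZ _ _ (cmT l)) (cm_d l j (tri_bilinear23 tT _)) big_tfam.
- rewrite big_tfam [RHS]row_sum_delta; apply: eq_bigr => i _ /=; congr (_ *: _).
  rewrite (scalarf_sum _ _ _ eps_scalar).
  under eq_bigr do rewrite (scalarfZ _ _ eps_scalar) eps_d mulrC eq_sym.
  exact: sum_delta_l.
Qed.

End Comatrix.

Section FiniteSubcomodule.
Variables (h : H) (n : nat) (u v : 'I_n -> H) (f g : 'I_n -> H -> K).
Hypotheses (h_uv : teq2 (wb_cm h) (tfam u v))
           (sf : forall j, scalar (f j)) (fu : forall j i, f j (u i) = (i == j)%:R)
           (sg : forall j, scalar (g j)) (gv : forall j i, g j (v i) = (i == j)%:R).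

Definition rep_comatrix i j : H := \sum_(q <- wb_cm (v i)) g j q.2 *: q.1.

Lemma cm_left_factor j : teq2 (wb_cm (u j)) (tfam u (rep_comatrix^~ j)).
Proof.
move=> b bb; rewrite big_tfam.
have -> : \sum_(p <- wb_cm (u j)) b p.1 p.2
    = \sum_(p <- wb_cm h) \sum_(q <- wb_cm p.1) b q.1 q.2 * g j p.2.
  under [RHS]eq_bigr do rewrite -mulr_suml.
  rewrite (h_uv (bilinear_form_mul (cm_scalar bb) (sg j))) big_tfam /=.
  by under [RHS]eq_bigr do rewrite gv mulrC; rewrite sum_delta_l.
rewrite (cm_coassoc h (trilinear_form_mulr bb (sg j))).
have bg := bilinear_form_comp (@linear_id _ _) (cm_contr_r_linear (sg j)) bb.
transitivity (\sum_(p <- wb_cm h) b p.1 (\sum_(q <- wb_cm p.2) g j q.2 *: q.1)).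
  apply: eq_bigr => p _; rewrite bil_sumr //; apply: eq_bigr => q _.
  by rewrite bilZr // mulrC.
by rewrite (h_uv bg) big_tfam.
Qed.

Lemma eps_rep_comatrix k j : wb_eps (rep_comatrix k j) = (k == j)%:R.
Proof.
have := congr1 (f k) (wba_counitr hH (u j)).
rewrite fu (scalarf_sum _ _ _ (sf k)).
under eq_bigr do rewrite (scalarfZ _ _ (sf k)) mulrC.
rewrite (cm_left_factor j (bilinear_form_mul (sf k) eps_scalar)) big_tfam /=.
by under eq_bigr do rewrite fu; rewrite sum_delta_l eq_sym.
Qed.

Lemma cm_rep_comatrix k j :
  teq2 (wb_cm (rep_comatrix k j)) (tfam (rep_comatrix k) (rep_comatrix^~ j)).
Proof.
move=> b bb; rewrite big_tfam.
pose b1 x z := \sum_(q <- wb_cm x) f k q.1 * b q.2 z.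
have bb1 : bilinear_form b1.
  apply: bilinear_formP => [z|x].
    exact: cm_scalar (bilinear_form_mul (sf k) (bil_scalarl bb z)).
  move=> a y1 y2; rewrite mulr_sumr -big_split; apply: eq_bigr => q _ /=.
  by rewrite (bil_scalarr bb) mulrDr mulrCA.
have coass := cm_coassoc (u j) (trilinear_form_mull (sf k) bb).
transitivity (\sum_(p <- wb_cm (u j)) f k p.1 * \sum_(q <- wb_cm p.2) b q.1 q.2).
  rewrite (cm_left_factor j (bilinear_form_mul (sf k) (cm_scalar bb))) big_tfam /=.
  by under [RHS]eq_bigr do rewrite fu; rewrite sum_delta_l.
under eq_bigr do rewrite mulr_sumr; rewrite -coass.
rewrite (cm_left_factor j bb1) big_tfam; apply: eq_bigr => i _ /=.
rewrite /b1 (cm_left_factor i (bilinear_form_mul (sf k) (bil_scalarl bb _))) big_tfam /=.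
by under eq_bigr do rewrite fu; rewrite sum_delta_l.
Qed.

Definition rep_span (x : 'rV[K]_n) : H := \sum_j x 0 j *: u j.

Lemma rep_span_cmap : regular_cmap (X := comatrix_comod rep_comatrix) rep_span.
Proof.
split=> [a x y|x b bb].
  rewrite /rep_span scaler_sumr -big_split; apply: eq_bigr => j _ /=.
  by rewrite !mxE scalerDl scalerA.
pose F z := \sum_(q <- wb_cm z) b q.1 q.2.
have sF : scalar F := cm_scalar bb.
rewrite big_map big_tfam /= -[LHS]/(F (rep_span x)).
rewrite {1}/rep_span (scalarf_sum _ _ _ sF).
rewrite (eq_bigr (fun j => x 0 j * F (u j))) => [|j _]; last exact: scalarfZ _ _ sF.
have Fu j : F (u j) = \sum_i b (u i) (rep_comatrix i j).
  by rewrite /F (cm_left_factor j bb) big_tfam.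
under eq_bigr => j _ do rewrite Fu mulr_sumr.
rewrite exchange_big; apply: eq_bigr => i _ /=.
by rewrite /rep_span sum_delta_row (bil_sumr bb); apply: eq_bigr => j _; rewrite bilZr.
Qed.

Lemma rep_span_counit : h = rep_span (\row_i wb_eps (v i)).
Proof.
rewrite -[LHS](wba_counitr hH) (teq2_contr_r eps_scalar h_uv) big_tfam.
by apply: eq_bigr => i _; rewrite mxE.
Qed.

End FiniteSubcomodule.

Theorem finite_subcomodule h : exists (X : preco H) (iota : X -> H) x,
  [/\ is_comod X, regular_cmap iota & h = iota x].
Proof.
have [n [u [v [u_free v_free h_uv]]]] := tens2_free_rep (wb_cm h).
have [f [sf fu]] := dual_family u_free.
have [g [sg gv]] := dual_family v_free.
exists (comatrix_comod (rep_comatrix v g)), (rep_span u), (\row_i wb_eps (v i)).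
split; first apply: comatrix_comodP.
- exact: eps_rep_comatrix h_uv sf fu sg gv.
- exact: cm_rep_comatrix h_uv sf fu sg gv.
- exact: rep_span_cmap h_uv sg gv.
- exact: rep_span_counit h_uv.
Qed.

End Coalgebra.

Section FiniteDimensional.
Variable K : fieldType.

Lemma vspace_of_closed (V : vectType K) (P : V -> Prop) :
  P 0 -> (forall a x y, P x -> P y -> P (a *: x + y)) ->
  exists U : {vspace V}, forall x, x \in U <-> P x.
Proof.
move=> P0 P_closed; apply: NNPP => noU.
suff /(_ (\dim {:V}).+1) [U [_]] :
    forall k, exists U : {vspace V}, {in U, forall x, P x} /\ (k <= \dim U)%N.
  by rewrite ltnNge dimvS // subvf.
elim=> [|k [U [UP dimU]]]; first by exists 0%VS; split=> // x; rewrite memv0 => /eqP ->.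
have [x [Px xU]] : exists x, P x /\ x \notin U.
  apply: NNPP => PU; apply: noU; exists U => x; split; first exact: UP.
  by move=> Px; apply: NNPP => xU; apply: PU; exists x; split=> //; apply/negP.
exists (U + <[x]>)%VS; split.
  move=> _ /memv_addP[w wU [_ /vlineP[c ->] ->]].
  by rewrite addrC; apply: P_closed => //; apply: UP.
apply: leq_ltn_trans dimU _; rewrite ltnNge; apply: contra xU => dimUx.
have /eqP -> : (U == U + <[x]>)%VS by rewrite eqEdim addvSl.
exact: subvP (addvSr U _) _ (memv_line x).
Qed.

Lemma teq2_proj_ker (X : vectType K) (V W : lmodType K) (L : X -> V)
  (U : {vspace X}) (s : tens2 X W) :
  linear L -> (forall x, L x = 0 <-> x \in U) ->
  teq2 [seq (L p.1, p.2) | p <- s] [::] -> teq2 s [seq (projv U p.1, p.2) | p <- s].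
Proof.
move=> lL kerL Ls0 b bb; apply/eqP; rewrite big_map -subr_eq0 -sumrB; apply/eqP.
pose e := vbasis {:X}.
transitivity (\sum_(p <- s) \sum_k coord e k (p.1 - projv U p.1) * b e`_k p.2).
  apply: eq_bigr => p _; rewrite -(scalarfB _ _ (bil_scalarl bb _)).
  rewrite {1}(coord_vbasis (memvf (p.1 - projv U p.1))) (bil_suml bb).
  by apply: eq_bigr => k _; rewrite bilZl.
rewrite exchange_big big1 // => k _ /=.
have [c [sc cL]] : exists c, scalar c /\
    forall x : X, c (L x) = coord e k (x - projv U x).
  apply: scalar_extend => // [a x y|x /kerL xU].
    by rewrite linearP opprD addrACA -scalerBr linearP.
  by rewrite projv_id // subrr linear0.
have := Ls0 _ (bilinear_form_mul sc (bil_scalarr bb e`_k)).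
rewrite big_map big_nil => Lsk; rewrite -[RHS]Lsk.
by apply: eq_bigr => p _; rewrite cL.
Qed.

End FiniteDimensional.

Lemma vsval_vsproj (K : fieldType) (V : vectType K) (U : {vspace V}) v :
  vsval (vsproj U v) = projv U v.
Proof. by rewrite unlock. Qed.

Section Subcomodule.
Variables (K : fieldType) (H : wbdata K) (X : preco H) (U : {vspace X}).
Hypotheses (cX : is_comod X)
  (U_stable : forall x, x \in U ->
     teq2 (@pc_co _ _ X x) [seq (projv U p.1, p.2) | p <- @pc_co _ _ X x]).

Lemma co_scalar (b : X -> H -> K) : bilinear_form b ->
  scalar (fun x => \sum_(p <- @pc_co _ _ X x) b p.1 p.2).
Proof.
move=> bb a x y; rewrite (co_lin cX a x y bb) big_cat big_map mulr_sumr.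
by congr (_ + _); apply: eq_bigr => p _; rewrite (bilZl bb).
Qed.

Definition subcomod : preco H :=
  @PreCo K H (subvs_of U)
    (fun z => [seq (vsproj U p.1, p.2) | p <- @pc_co _ _ X (vsval z)]).

Lemma vsval_subcomod z :
  teq2 (@pc_co _ _ X (vsval z)) [seq (vsval p.1, p.2) | p <- @pc_co _ _ subcomod z].
Proof.
rewrite /= -map_comp; under eq_map do rewrite /= vsval_vsproj.
exact/U_stable/subvsP.
Qed.

Lemma subcomodP : is_comod subcomod.
Proof.
have lproj : linear (vsproj U) by exact: linearP.
split=> [a z1 z2 b bb|z T tT|z] /=.
- rewrite big_cat !big_map /=.
  rewrite (co_lin cX _ _ _ (bilinear_form_comp lproj (@linear_id _ _) bb)).
  by rewrite big_cat big_map; congr (_ + _); apply: eq_bigr => p _; rewrite linearZ.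
- have tT' : trilinear_form (fun x y w => T (vsproj U x) y w).
    by case: tT => t1 t2 t3; split=> *; rewrite ?linearP ?t1 ?t2 ?t3.
  pose S y w := \sum_(q <- @pc_co _ _ X y) T (vsproj U q.1) q.2 w.
  have bS : bilinear_form S.
    apply: bilinear_formP => [w|y]; first exact: co_scalar (tri_bilinear12 tT' w).
    move=> a w1 w2; rewrite mulr_sumr -big_split; apply: eq_bigr => q _ /=.
    by case: tT => _ _ ->.
  rewrite !big_allpairs_dep !big_map /=.
  transitivity (\sum_(p <- @pc_co _ _ X (vsval z)) S (projv U p.1) p.2).
    by apply: eq_bigr => p _; rewrite big_map -vsval_vsproj.
  have := U_stable (subvsP z) bS; rewrite big_map /= => <-.
  by have := co_coassoc cX (vsval z) tT'; rewrite !big_allpairs_dep.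
- rewrite big_map /=; under eq_bigr do rewrite -linearZ.
  by rewrite -linear_sum /= (co_counit cX) vsvalK.
Qed.

End Subcomodule.

Section WeakBialgebraIsomorphisms.
Variables (K : fieldType) (A B : wbdata K) (phi : A -> B).
Hypothesis hphi : is_wbamap phi.

Lemma wbamap_inv (psi : B -> A) : cancel phi psi -> cancel psi phi -> is_wbamap psi.
Proof.
move=> phiK psiK; have phi_inj := can_inj phiK.
have lpsi : linear psi by move=> a x y; apply: phi_inj; rewrite (wbm_lin hphi) !psiK.
split=> // [x y|||y].
- by apply: phi_inj; rewrite (wbm_mul hphi) !psiK.
- by apply: phi_inj; rewrite (wbm_one hphi) psiK.
- move=> y b bb; have := wbm_cm hphi (psi y) (bilinear_form_comp lpsi lpsi bb).
  by rewrite psiK !big_map /=; under [RHS]eq_bigr do rewrite !phiK.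
- by rewrite -(wbm_eps hphi) psiK.
Qed.

Lemma wbamap_bij_iso : injective phi -> (forall y, exists x, phi x = y) -> is_wba_iso phi.
Proof.
move=> phi_inj phi_surj; split=> //.
pose psi y := epsilon (inhabits 0) (fun x => phi x = y).
have psiK : cancel psi phi := fun y => epsilon_spec _ _ (phi_surj y).
have phiK : cancel phi psi by move=> x; apply: phi_inj; rewrite psiK.
by exists psi; split=> //; apply: wbamap_inv.
Qed.

End WeakBialgebraIsomorphisms.

Section FullEssentiallySurjective.
Variables (K : fieldType) (A B : wbdata K) (hA : is_wba A) (hB : is_wba B)
  (Fco : forall X : preco A, X -> tens2 X B) (phi : A -> B).
Hypotheses (hphi : is_wbamap phi) (hEq : is_equivalence Fco)
  (F_comod : forall X : preco A, is_comod X -> is_comod (Fobj Fco X))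
  (Fco_phi : forall X : preco A, is_comod X -> forall x : X,
     teq2 (@Fco X x) [seq (p.1, phi p.2) | p <- @pc_co _ _ X x]).

Lemma phi_surj y : exists x, phi x = y.
Proof.
have [Z [iota [z [cZ iota_cmap ->]]]] := finite_subcomodule hB y.
have [X [cX [f [g [cf _ _ gK]]]]] := hEq.2 Z cZ.
have lf : linear f by move=> *; exact: linearP.
have co_fgz : teq2 (@pc_co _ _ Z z) [seq (f p.1, phi p.2) | p <- @pc_co _ _ X (g z)].
  rewrite -{1}[z]gK; apply: teq2_trans (cf (g z)) _.
  by have := teq2_map lf (@linear_id _ _) (Fco_phi cX (g z)); rewrite -map_comp.
exists (\sum_(p <- @pc_co _ _ X (g z)) wb_eps (iota (f p.1)) *: p.2).
rewrite (linearf_sum _ _ _ (wbm_lin hphi)) (regular_cmap_counit hB _ iota_cmap).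
rewrite (teq2_contr_l (regular_cmap_eps hB iota_cmap) co_fgz) big_map.
by apply: eq_bigr => p _; rewrite (linearfZ _ _ (wbm_lin hphi)).
Qed.

Lemma phi_iota_regular_cmap (X : preco A) (iota : X -> A) :
  is_comod X -> regular_cmap iota ->
  regular_cmap (X := Fobj Fco X) (fun x => phi (iota x)).
Proof.
move=> cX [liota iota_co]; have lphi := wbm_lin hphi.
have lL : linear (fun x => phi (iota x)) by move=> a x y; rewrite liota lphi.
split=> // x; apply: teq2_trans (wbm_cm hphi (iota x)) _.
apply: teq2_trans (teq2_map lphi lphi (iota_co x)) _; rewrite -map_comp.
apply: teq2_sym; have := teq2_map lL (@linear_id _ _) (Fco_phi cX x).
by rewrite -map_comp.
Qed.

Lemma phi_inj : injective phi.
Proof.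
have lphi := wbm_lin hphi.
suff phi_eq0 a : phi a = 0 -> a = 0.
  move=> a a' eq_phi; apply/eqP; rewrite -subr_eq0; apply/eqP/phi_eq0.
  by rewrite linearfB // eq_phi subrr.
have [X [iota [x [cX iota_cmap ->]]]] := finite_subcomodule hA a; move=> phi_x0.
pose L y := phi (iota y).
have [lL L_co] : regular_cmap (X := Fobj Fco X) L := phi_iota_regular_cmap cX iota_cmap.
have [U memU] : exists U : {vspace X}, forall y, y \in U <-> L y = 0.
  apply: vspace_of_closed => [|c y z Ly Lz]; first exact: linearf0 lL.
  by rewrite lL Ly Lz scaler0 addr0.
have U_stable y : y \in U ->
    teq2 (@Fco X y) [seq (projv U p.1, p.2) | p <- @Fco X y].
  move=> /memU Ly0; apply: teq2_proj_ker lL (fun y => iff_sym (memU y)) _.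
  apply: teq2_trans (teq2_sym (L_co y)) _; rewrite Ly0 => b bb.
  by rewrite big_nil; apply: (scalarf0 (cm_scalar hB bb)).
have cZ := subcomodP (F_comod cX) U_stable.
have [Y [cY [f [g [cf _ _ gK]]]]] := hEq.2 _ cZ.
pose incl : 'Hom(Y, X) := (linfun (@vsval _ _ U) \o f)%VF.
have inclE y : incl y = vsval (f y) by rewrite comp_lfunE lfunE.
have incl_cmap : is_cmap incl.
  apply: hEq.1 => // y; rewrite inclE.
  apply: teq2_trans (@vsval_subcomod _ _ (Fobj Fco X) U U_stable (f y)) _.
  have lval : linear (@vsval _ _ U) by move=> *; exact: linearP.
  move=> b bb; have := cf y _ (bilinear_form_comp lval (@linear_id _ _) bb).
  by rewrite !big_map => ->; apply: eq_bigr => p _; rewrite /= inclE.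
suff iota_U y : y \in U -> iota y = 0 by apply/iota_U/memU.
move=> yU; have -> : y = incl (g (vsproj U y)) by rewrite inclE gK vsprojK.
rewrite (regular_cmap_counit hA _ iota_cmap).
rewrite (teq2_contr_l (regular_cmap_eps hA iota_cmap) (incl_cmap _)) big_map.
rewrite big1 // => p _.
have /memU : incl p.1 \in U by rewrite inclE subvsP.
by rewrite /= -(wbm_eps hphi) /L => ->; rewrite (scalarf0 (eps_scalar hB)) scale0r.
Qed.

End FullEssentiallySurjective.

Unset Implicit Arguments.

Theorem corollary3p6 (K : fieldType) (A B : wbdata K)
  (hA : is_wba A) (hB : is_wba B)
  (Fco : forall X : preco A, X -> tens2 X B)
  (phiF : forall X Y : preco A,
     'Hom(Fobj Fco (bobj X Y), bobj (Fobj Fco X) (Fobj Fco Y)))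
  (omF : 'Hom(Fobj Fco (u_obj (unitobj A)), u_obj (unitobj B)))
  (hF : strong_comonoidal_over_forget phiF omF)
  (hEq : is_equivalence Fco) :
  forall phi : A -> B, is_wbamap phi -> eq_Mphi phiF omF phi ->
  is_wba_iso phi.
Proof.
move=> phi hphi [Fco_phi _ _].
have F_comod X : is_comod X -> is_comod (Fobj Fco X) := F_obj hF (X := X).
apply: wbamap_bij_iso => //.
- exact: (@phi_inj _ _ _ hA hB _ _ hphi hEq F_comod Fco_phi).
- exact: (@phi_surj _ _ _ hB _ _ hphi hEq Fco_phi).
Qed.
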